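(* Let $Q_8=\{\pm1,\pm i,\pm j,\pm k\}$ be the quaternion group. The following d-identities form a basis of d-identities of $Q_8$ (i.e. they all hold in $Q_8$, and every group satisfying all of them is isomorphic to a section of $Q_8$): (1) $\omega_8=\bigvee_{0\le i<j\le 8}(x_i=x_j)$; (2) $x^4=1$; (3) $(x_1\in\langle x_2\rangle)\vee(x_2\in\langle x_1\rangle)\vee(x_1^2x_2^2=1)$; (4) $\Big[\bigvee_{i\ne j,\ i,j\in\{1,2,3\}}x_i\in\langle x_j\rangle\Big]\vee(x_1x_2=x_3)\vee(x_1x_2=x_3^{-1})$.
   Context: A d-identity (disjunctive identity) is a universally quantified formula $\forall x_1\dots x_k\,[(f_1=1)\vee\dots\vee(f_n=1)]$ with the $f_i$ words in the free group on the variables; $u=v$ abbreviates $uv^{-1}=1$. A group satisfies it if it is true for all assignments. For a group $G$, $\mathrm{dvar}(G)$ is the class of groups satisfying every d-identity satisfied by $G$; for finite $G$ it is the class of groups isomorphic to sections (quotients of subgroups) of $G$. A set of d-identities is a basis of d-identities of $G$ if all its members hold in $G$ and every group satisfying them lies in $\mathrm{dvar}(G)$. Notation: ''$u\in\langle v\rangle$'' abbreviates $(u=1)\vee(u=v)\vee(u=v^2)\vee(u=v^3)$. *)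

From HB Require Import structures.
From mathcomp Require Import all_boot all_fingroup all_solvable.
Set Implicit Arguments. Unset Strict Implicit. Unset Printing Implicit Defensive.

Record Grp := MkGrp {
  gcar :> Type;
  gmul : gcar -> gcar -> gcar;
  ginv : gcar -> gcar;
  gone : gcar;
  gmulA : forall x y z, gmul x (gmul y z) = gmul (gmul x y) z;
  gmul1 : forall x, gmul gone x = x;
  gmulV : forall x, gmul (ginv x) x = gone
}.

Section DIdentities.
Variables (T : Type) (mul : T -> T -> T) (inv : T -> T) (one : T).

Fixpoint gpow (x : T) (n : nat) : T :=
  match n with 0 => one | n'.+1 => mul x (gpow x n') end.

Definition in_cyc (u v : T) : Prop :=
  u = one \/ u = v \/ u = gpow v 2 \/ u = gpow v 3.

Definition did1 : Prop :=
  forall x : nat -> T, exists i j, i < j <= 8 /\ x i = x j.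

Definition did2 : Prop := forall x : T, gpow x 4 = one.

Definition did3 : Prop := forall x1 x2 : T,
  in_cyc x1 x2 \/ in_cyc x2 x1 \/ mul (gpow x1 2) (gpow x2 2) = one.

Definition did4 : Prop := forall x1 x2 x3 : T,
  in_cyc x1 x2 \/ in_cyc x1 x3 \/ in_cyc x2 x1 \/ in_cyc x2 x3 \/
  in_cyc x3 x1 \/ in_cyc x3 x2 \/ mul x1 x2 = x3 \/ mul x1 x2 = inv x3.

Definition sat_Q8_basis : Prop := did1 /\ did2 /\ did3 /\ did4.
End DIdentities.

Definition grp_sat_basis (G : Grp) : Prop :=
  sat_Q8_basis (@gmul G) (@ginv G) (@gone G).

Definition iso_section_Q8 (G : Grp) : Prop :=
  exists (K N : {group 'Q_8}), (N <| K)%g /\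
    exists f : G -> coset_of N,
      (forall x y : G, f (gmul x y) = (f x * f y)%g) /\
      injective f /\
      (forall c : coset_of N, c \in (K / N)%g <-> exists x : G, f x = c).

From mathcomp Require Import all_boot all_fingroup all_solvable.
From Stdlib Require Import ClassicalEpsilon.

(* Identity (1) says that a group has at most eight elements, (2) that its exponent divides 4.
   If every square is trivial, (4) shows that the group is spanned by two elements a, b, hence is
   a homomorphic image of Q8 under x |-> a, y |-> b. Otherwise pick a with a^2 <> 1: either every
   element lies in <a>, and the group is cyclic of order 4, or some b lies outside <a>, and (3)
   applied to (b, a) and (ab, a) gives b^2 = a^2 and ba = a^3 b, so that x^i y^j |-> a^i b^j is an
   injective homomorphism from Q8, onto by (1). Conversely Q8 satisfies (1)-(4): d-identities pass
   to homomorphic images, and they are checked by computation on a concrete model of Q8. *)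

Set Implicit Arguments. Unset Strict Implicit. Unset Printing Implicit Defensive.

Local Infix "⋅" := (@gmul _) (at level 40, left associativity).
Local Notation "x ^^ n" := (gpow (@gmul _) (@gone _) x n) (at level 29, left associativity).
Local Notation "x \in_cyc y" := (in_cyc (@gmul _) (@gone _) x y) (at level 70).

Section GrpTheory.
Variable G : Grp.
Implicit Types x y z : G.

Lemma gmulgV x : x ⋅ ginv x = gone G.
Proof.
rewrite -[x ⋅ _]gmul1 -(gmulV (ginv x)) -gmulA (gmulA (ginv x)) gmulV gmul1.
by rewrite gmulV.
Qed.

Lemma gmulg1 x : x ⋅ gone G = x.
Proof. by rewrite -(gmulV x) gmulA gmulgV gmul1. Qed.

Lemma gmulKg x y : ginv x ⋅ (x ⋅ y) = y.
Proof. by rewrite gmulA gmulV gmul1. Qed.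

Lemma gmulgI x : injective (@gmul G x).
Proof. by move=> y z e; rewrite -(gmulKg x y) e gmulKg. Qed.

Lemma gmulIg x : injective ((@gmul G)^~ x).
Proof. by move=> y z e; rewrite -(gmulg1 y) -(gmulg1 z) -(gmulgV x) !gmulA /= e. Qed.

Lemma gmul_eq1 x y : x ⋅ y = gone G -> x = ginv y.
Proof. by move=> e; apply: (@gmulIg y); rewrite /= e gmulV. Qed.

Lemma ginvK x : ginv (ginv x) = x.
Proof. exact/esym/gmul_eq1/gmulgV. Qed.

Lemma gpowD x m n : x ^^ (m + n) = x ^^ m ⋅ x ^^ n.
Proof. by elim: m => [|m IH] /=; rewrite ?gmul1 // IH gmulA. Qed.

Lemma gpowM x m n : x ^^ (m * n) = (x ^^ m) ^^ n.
Proof. by elim: n => [|n IH]; rewrite ?muln0 // mulnS gpowD IH. Qed.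

Lemma gpow1n n : gone G ^^ n = gone G.
Proof. by elim: n => //= n ->; rewrite gmul1. Qed.

Lemma gpow1 x : x ^^ 1 = x.
Proof. exact: gmulg1. Qed.

Lemma gpow2 x : x ^^ 2 = x ⋅ x.
Proof. by rewrite /= gmulg1. Qed.

Lemma gpowSr x n : x ^^ n.+1 = x ^^ n ⋅ x.
Proof. by rewrite -addn1 gpowD gpow1. Qed.

Lemma gpow_modn x m n : x ^^ m = gone G -> x ^^ (n %% m) = x ^^ n.
Proof. by move=> xm; rewrite {2}(divn_eq n m) gpowD mulnC gpowM xm gpow1n gmul1. Qed.

Lemma gpow_eq1_order4 x i :
  x ^^ 4 = gone G -> x ^^ 2 <> gone G -> x ^^ i = gone G -> 4 %| i.
Proof.
move=> x4 x2 xi; have xi2 : x ^^ ((i %% 4 * 2) %% 4) = gone G.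
  by rewrite modnMml gpow_modn // gpowM xi gpow1n.
rewrite -(gpow_modn i x4) in xi; rewrite /dvdn.
have: i %% 4 < 4 by rewrite ltn_pmod.
by case: (i %% 4) xi xi2 => [|[|[|[|]]]] // xi xi2; case: x2.
Qed.

Lemma in_cycP x y : y ^^ 4 = gone G -> x \in_cyc y <-> exists n, x = y ^^ n.
Proof.
move=> y4; split=> [[->|[->|[->|->]]]|[n ->]]; first by exists 0.
- by exists 1; rewrite gpow1.
- by exists 2.
- by exists 3.
rewrite /in_cyc -(gpow_modn n y4).
have: n %% 4 < 4 by rewrite ltn_pmod.
by case: (n %% 4) => [|[|[|[|]]]] //= _; rewrite ?gmulg1; tauto.
Qed.

End GrpTheory.

Section GrpMorphism.
Variables (G H : Grp) (h : G -> H).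
Hypothesis hM : forall x y, h (x ⋅ y) = h x ⋅ h y.

Lemma gmorph1 : h (gone G) = gone H.
Proof. by apply: (@gmulIg _ (h (gone G))); rewrite /= -hM !gmul1. Qed.

Lemma gmorphV x : h (ginv x) = ginv (h x).
Proof. by apply: gmul_eq1; rewrite -hM gmulV gmorph1. Qed.

Lemma gmorphX x n : h (x ^^ n) = h x ^^ n.
Proof. by elim: n => /= [|n <-]; rewrite ?gmorph1 ?hM. Qed.

Lemma gmorph_in_cyc x y : x \in_cyc y -> h x \in_cyc h y.
Proof. by rewrite /in_cyc -!gmorphX -gmorph1; case=> [->|[->|[->|->]]]; tauto. Qed.

Lemma gmorph_inj : (forall x, h x = gone H -> x = gone G) -> injective h.
Proof.
move=> kerh x y e; apply: (@gmulIg _ (ginv y)) => /=.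
by rewrite gmulgV; apply: kerh; rewrite hM gmorphV e gmulgV.
Qed.

Hypothesis h_surj : forall y, exists x, h x = y.

Lemma sat_basis_surj : grp_sat_basis G -> grp_sat_basis H.
Proof.
have [s hs] : exists s : H -> G, forall y, h (s y) = y.
  exact: (choice (fun y x => h x = y) h_surj).
case=> d1 [d2 [d3 d4]]; split; [|split; [|split]].
- move=> z; have [i [j [ij e]]] := d1 (s \o z).
  by exists i, j; rewrite -(hs (z i)) -(hs (z j)); move: e => /= ->.
- by move=> y; rewrite -(hs y) -gmorphX d2 gmorph1.
- move=> y1 y2; rewrite -(hs y1) -(hs y2).
  case: (d3 (s y1) (s y2)) => [/gmorph_in_cyc|[/gmorph_in_cyc|e]]; try tauto.
  by right; right; rewrite -!gmorphX -hM e gmorph1.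
- move=> y1 y2 y3; rewrite -(hs y1) -(hs y2) -(hs y3) -hM -gmorphV.
  by case: (d4 (s y1) (s y2) (s y3)) => [|[|[|[|[|[|[|]]]]]]];
    try move/gmorph_in_cyc; try move=> ->; tauto.
Qed.

End GrpMorphism.

Lemma did1_card (T : finType) : #|T| <= 8 -> did1 T.
Proof.
move=> card_T x; apply: NNPP => no_repeat.
suff /leq_card : injective (fun i : 'I_9 => x i) by rewrite card_ord leqNgt ltnS card_T.
move=> i j e; apply: val_inj; case: (ltngtP i j) => // [ij|ji]; case: no_repeat.
- by exists i, j; rewrite ij -ltnS ltn_ord.
- by exists j, i; rewrite ji -ltnS ltn_ord.
Qed.

Lemma did1_inj_surj (T : finType) (X : Type) (f : T -> X) :
  8 <= #|T| -> injective f -> did1 X -> forall y, exists x, f x = y.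
Proof.
move=> card_T inj_f d1 y; have /card_gt0P [t0 _] : 0 < #|T| by apply: leq_trans card_T.
pose s := [seq f t | t : T].
have size_s : size s = #|T| by rewrite size_map -cardT.
have s_nth k : k < #|T| -> nth y s k = f (nth t0 (enum T) k).
  by move=> k_T; rewrite (nth_map t0) // -cardE.
have [i [j [/andP [ij j8] e]]] := d1 (nth y s).
have i_T : i < #|T| by rewrite (leq_trans ij) // (leq_trans j8).
case: (ltnP j #|T|) => [j_T | T_j].
  move: e; rewrite !s_nth // => /inj_f /eqP.
  by rewrite nth_uniq -?cardE ?enum_uniq // (ltn_eqF ij).
by exists (nth t0 (enum T) i); rewrite -s_nth // e nth_default ?size_s.
Qed.

(* [(i, j)] encodes [x^i y^j] in [<x, y | x^4 = 1, y^2 = x^2, y x = x^3 y>]. *)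
Definition q8c := ('I_4 * bool)%type.

Definition q8c_of (n : nat) (b : bool) : q8c := (Ordinal (ltn_pmod n (isT : 0 < 4)), b).

Definition q8c_one : q8c := q8c_of 0 false.

Definition q8c_mul (u v : q8c) : q8c :=
  q8c_of (u.1 + (if u.2 then 3 * v.1 else v.1) + (if u.2 && v.2 then 2 else 0))
         (u.2 (+) v.2).

Definition q8c_inv (u : q8c) : q8c := q8c_of (if u.2 then u.1 + 2 else 4 - u.1) u.2.

Ltac q8c_case := case=> -[[|[|[|[|?]]]] ?] [] => //.

Lemma q8c_mulA u v w : q8c_mul u (q8c_mul v w) = q8c_mul (q8c_mul u v) w.
Proof. by apply/eqP; move: u v w; do 3!q8c_case. Qed.

Lemma q8c_mul1 u : q8c_mul q8c_one u = u.
Proof. by apply/eqP; move: u; q8c_case. Qed.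

Lemma q8c_mulV u : q8c_mul (q8c_inv u) u = q8c_one.
Proof. by apply/eqP; move: u; q8c_case. Qed.

Definition Q8m : Grp := MkGrp q8c_mulA q8c_mul1 q8c_mulV.

Lemma Q8m_in_cycP (u v : Q8m) :
  reflect (u \in_cyc v) [|| u == q8c_one, u == v, u == v ^^ 2 | u == v ^^ 3].
Proof. exact: (orPP eqP (orPP eqP (orPP eqP eqP))). Qed.

Lemma Q8m_sat_basis : grp_sat_basis Q8m.
Proof.
split; first by apply: did1_card; rewrite card_prod card_ord card_bool.
split; first by move=> u; apply/eqP; move: u; q8c_case.
split=> [u v | u v w].
  apply/(orPP (Q8m_in_cycP u v) (orPP (Q8m_in_cycP v u) eqP)).
  by move: u v; do 2!q8c_case.
apply/(orPP (Q8m_in_cycP u v) (orPP (Q8m_in_cycP u w) (orPP (Q8m_in_cycP v u)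
      (orPP (Q8m_in_cycP v w) (orPP (Q8m_in_cycP w u) (orPP (Q8m_in_cycP w v)
      (orPP eqP eqP))))))).
by move: u v w; do 3!q8c_case.
Qed.

Section Q8Eval.
Variables (H : Grp) (a b : H).

Definition q8_eval (u : Q8m) : H := a ^^ u.1 ⋅ (if u.2 then b else gone H).

Hypothesis a4 : a ^^ 4 = gone H.

Lemma q8_eval_morph_cyclic (u v : Q8m) :
  ~~ u.2 -> ~~ v.2 -> q8_eval (u ⋅ v) = q8_eval u ⋅ q8_eval v.
Proof.
by case: u v => i [] [k []] // _ _; rewrite /q8_eval /= !gmulg1 gpow_modn // addn0 gpowD.
Qed.

Hypotheses (b2 : b ^^ 2 = a ^^ 2) (ba : b ⋅ a = a ^^ 3 ⋅ b).

Lemma gmul_b_apow k : b ⋅ a ^^ k = a ^^ (3 * k) ⋅ b.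
Proof.
elim: k => [|k IH]; first by rewrite /= gmulg1 gmul1.
by rewrite [a ^^ k.+1]/= gmulA ba -gmulA IH gmulA -gpowD mulnS.
Qed.

Lemma q8_eval_morph (u v : Q8m) : q8_eval (u ⋅ v) = q8_eval u ⋅ q8_eval v.
Proof.
case: u v => i [] [k []]; rewrite /q8_eval /= gpow_modn // !gmulg1 ?addn0.
- have bb : b ⋅ b = a ^^ 2 by rewrite -b2 /= gmulg1.
  by rewrite -gmulA (gmulA b) gmul_b_apow -gmulA bb -!gpowD addnA.
- by rewrite -gmulA gmul_b_apow gmulA -gpowD.
- by rewrite gmulA -gpowD.
- by rewrite -gpowD.
Qed.

Lemma q8_eval_inj : a ^^ 2 <> gone H -> ~ b \in_cyc a -> injective q8_eval.
Proof.
move=> a2 b_a; apply: (gmorph_inj q8_eval_morph); case=> i [] e.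
  case: b_a; apply/in_cycP => //; exists (3 * i); rewrite /q8_eval /= in e.
  by apply: (@gmulgI _ (a ^^ i)); rewrite /= e -gpowD -mulSn gpowM a4 gpow1n.
move: e; rewrite /q8_eval /= gmulg1 => /(gpow_eq1_order4 a4 a2).
by rewrite /dvdn modn_small // => /eqP i0; congr (_, _); apply: val_inj.
Qed.

End Q8Eval.

Definition fingrp (gT : finGroupType) : Grp :=
  @MkGrp gT *%g (fun x => x^-1)%g 1%g mulgA mul1g mulVg.

Lemma gpow_fingrp (gT : finGroupType) (x : fingrp gT) n : x ^^ n = (x ^+ n)%g.
Proof. by elim: n => // n IH; rewrite /= IH expgS. Qed.

Lemma Q8_presentation : exists x y : fingrp 'Q_8,
  [/\ x ^^ 4 = gone _, y ^^ 2 = x ^^ 2, y ⋅ x = x ^^ 3 ⋅ y, x ^^ 2 <> gone _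
    & ~ y \in_cyc x].
Proof.
have [[x y] [_ _ ox /setDP [_ y_x]] [_ y2 xy]] :=
  @generators_quaternion _ [set: 'Q_8]%G 3 isT (isog_refl _).
have x4 : (x : fingrp 'Q_8) ^^ 4 = gone _ by rewrite gpow_fingrp /= -(expg_order x) ox.
exists x, y; split=> //.
- by rewrite !gpow_fingrp.
- have -> : (x : fingrp 'Q_8) ^^ 3 = (x^-1)%g by rewrite gpow_fingrp invg_expg ox.
  by rewrite /= (conjgC x^-1 y) conjVg xy invgK.
- by rewrite gpow_fingrp => /eqP; rewrite -order_dvdn ox.
- by case/(in_cycP _ x4) => n yx; rewrite yx gpow_fingrp mem_cycle in y_x.
Qed.

Lemma Q8m_Q8_iso : exists phi : Q8m -> fingrp 'Q_8,
  (forall u v, phi (u ⋅ v) = phi u ⋅ phi v) /\ bijective phi.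
Proof.
have [x [y [x4 y2 yx x2 y_x]]] := Q8_presentation.
exists (q8_eval x y); split; first exact: q8_eval_morph.
apply: (@inj_card_bij q8c 'Q_8); first exact: (q8_eval_inj x4 y2 yx x2 y_x).
by rewrite -cardsT (@card_quaternion 3) // card_prod card_ord card_bool.
Qed.

Lemma Q8_sat_basis : grp_sat_basis (fingrp 'Q_8).
Proof.
have [phi [phiM [psi _ psiK]]] := Q8m_Q8_iso.
by apply: (sat_basis_surj phiM) Q8m_sat_basis => y; exists (psi y).
Qed.

Definition iso_section (gT : finGroupType) (G : Grp) : Prop :=
  exists (K N : {group gT}), (N <| K)%g /\
    exists f : G -> coset_of N,
      (forall x y : G, f (x ⋅ y) = (f x * f y)%g) /\
      injective f /\
      (forall c : coset_of N, c \in (K / N)%g <-> exists x : G, f x = c).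

Section HomImageSection.
Local Open Scope group_scope.
Variables (gT : finGroupType) (G : Grp) (K : {group gT}) (h : gT -> G).
Hypothesis hM : {in K &, forall x y, h (x * y) = h x ⋅ h y}.

Lemma hom_in1 : h 1 = gone G.
Proof. by apply: (@gmulIg _ (h 1)); rewrite /= -hM ?group1 // mulg1 gmul1. Qed.

Lemma hom_inV x : x \in K -> h x^-1 = ginv (h x).
Proof. by move=> Kx; apply: gmul_eq1; rewrite -hM ?groupV // mulVg hom_in1. Qed.

Lemma hom_in_eq x y : x \in K -> y \in K -> (h (x * y^-1) = gone G <-> h x = h y).
Proof.
move=> Kx Ky; rewrite hM ?groupV // hom_inV //.
by split=> [/gmul_eq1 ->|->]; rewrite ?ginvK ?gmulgV.
Qed.

Definition hker :=
  [set x in K | if excluded_middle_informative (h x = gone G) then true else false].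

Lemma hkerP x : reflect (x \in K /\ h x = gone G) (x \in hker).
Proof.
rewrite inE; case: excluded_middle_informative => e; rewrite ?andbT ?andbF.
  by apply: (iffP idP) => [|[]].
by constructor=> -[].
Qed.

Lemma group_set_hker : group_set hker.
Proof.
apply/group_setP; split=> [|x y /hkerP [Kx hx] /hkerP [Ky hy]].
  by apply/hkerP; rewrite group1 hom_in1.
by apply/hkerP; rewrite groupM // hM // hx hy gmul1.
Qed.

Canonical hker_group := Group group_set_hker.

Lemma hker_normal : hker <| K.
Proof.
apply/andP; split; first by apply/subsetP => x /hkerP [].
apply/subsetP => e Ke; rewrite inE; apply/subsetP => _ /imsetP [x /hkerP [Kx hx] ->].
apply/hkerP; rewrite memJ_norm ?(subsetP (normG K)) //; split=> //.
by rewrite /conjg !hM ?groupM ?groupV // hx gmul1 hom_inV // gmulV.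
Qed.

Lemma coset_hker_eq x y : x \in K -> y \in K ->
  coset hker x = coset hker y <-> h x = h y.
Proof.
move=> Kx Ky; have nK := subsetP (normal_norm hker_normal).
rewrite -(hom_in_eq Kx Ky); split.
  by move/(rcoset_kercosetP (nK x Kx) (nK y Ky)); rewrite mem_rcoset => /hkerP [].
move=> e; apply/(rcoset_kercosetP (nK x Kx) (nK y Ky)); rewrite mem_rcoset.
by apply/hkerP; rewrite groupM ?groupV.
Qed.

Hypothesis h_onto : forall g, exists2 x, x \in K & h x = g.

Lemma iso_section_hom_image : iso_section gT G.
Proof.
have [s sK hs] : exists2 s : G -> gT, forall g, s g \in K & forall g, h (s g) = g.
  have /choice [s sP] : forall g, exists x, x \in K /\ h x = g.
    by move=> g; have [x] := h_onto g; exists x.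
  by exists s => g; case: (sP g).
exists K, hker_group; split; first exact: hker_normal.
have nK := subsetP (normal_norm hker_normal).
exists (fun g => coset hker (s g)); split; [|split].
- move=> g1 g2; rewrite -morphM ?nK //.
  by apply/coset_hker_eq; rewrite ?groupM // hM // !hs.
- by move=> g1 g2 /coset_hker_eq; rewrite !hs; apply.
- move=> c; split=> [/morphimP [x _ Kx ->] | [g <-]]; last by rewrite mem_quotient.
  by exists (h x); apply/coset_hker_eq; rewrite ?hs.
Qed.

End HomImageSection.

Lemma iso_section_Q8_model_image (G : Grp) (K : pred Q8m) (h : Q8m -> G) :
  K (gone Q8m) -> (forall u v, K u -> K v -> K (u ⋅ v)) ->
  (forall u v, K u -> K v -> h (u ⋅ v) = h u ⋅ h v) ->
  (forall g, exists2 u, K u & h u = g) -> iso_section_Q8 G.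
Proof.
move=> K1 KM hM h_onto; have [phi [phiM [dec phiK decK]]] := Q8m_Q8_iso.
have decM (e1 e2 : 'Q_8) : dec (e1 * e2)%g = dec e1 ⋅ dec e2.
  by apply: (can_inj phiK); rewrite phiM !decK.
have dec1 : dec (gone (fingrp 'Q_8)) = gone Q8m by rewrite -(gmorph1 phiM) phiK.
have gK : group_set [set e : 'Q_8 | K (dec e)].
  by apply/group_setP; split=> [|e1 e2]; rewrite !inE ?decM ?dec1 //; apply: KM.
apply: (@iso_section_hom_image _ G (Group gK) (h \o dec)).
  by move=> e1 e2; rewrite !inE => Ke1 Ke2 /=; rewrite decM hM.
by move=> g; have [u Ku <-] := h_onto g; exists (phi u); rewrite ?inE /= phiK.
Qed.

Lemma iso_section_Q8_presented (G : Grp) (a b : G) :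
  a ^^ 4 = gone G -> b ^^ 2 = a ^^ 2 -> b ⋅ a = a ^^ 3 ⋅ b ->
  (forall g, exists u, q8_eval a b u = g) -> iso_section_Q8 G.
Proof.
move=> a4 b2 ba onto; apply: (@iso_section_Q8_model_image G predT (q8_eval a b)) => //.
- by move=> u v _ _; exact: (q8_eval_morph a4 b2 ba).
- by move=> g; have [u <-] := onto g; exists u.
Qed.

Lemma iso_section_Q8_cyclic (G : Grp) (a : G) :
  a ^^ 4 = gone G -> (forall g, g \in_cyc a) -> iso_section_Q8 G.
Proof.
move=> a4 cyc; apply: (@iso_section_Q8_model_image G (fun u => ~~ u.2) (q8_eval a a)).
- by [].
- by case=> i [] [k []].
- by move=> u v; exact: (q8_eval_morph_cyclic a a4).
move=> g; have /(in_cycP _ a4) [n ->] := cyc g.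
by exists (q8c_of n false); rewrite // /q8_eval /= gmulg1 gpow_modn.
Qed.

Section Exponent4.
Variable G : Grp.
Hypothesis d2 : did2 (@gmul G) (gone G).
Implicit Types x y : G.

Lemma in_cyc_sym x y : x ^^ 2 <> gone G -> x \in_cyc y -> y \in_cyc x.
Proof.
move=> x2; case=> [x1|[->|[x_y2|->]]].
- by case: x2; rewrite x1 gpow1n.
- by right; left.
- by case: x2; rewrite x_y2 -gpowM d2.
right; right; right; rewrite -gpowM -(gpow_modn (3 * 3) (d2 y)).
by rewrite gpow1.
Qed.

Lemma in_cyc_mulKr x y : x ⋅ y \in_cyc x -> y \in_cyc x.
Proof.
case/(in_cycP _ (d2 x)) => n e; apply/(in_cycP _ (d2 x)); exists (3 + n).
by rewrite gpowD -e gmulA -gpowSr d2 gmul1.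
Qed.

Lemma q8_relations x y : did3 (@gmul G) (gone G) -> x ^^ 2 <> gone G -> ~ y \in_cyc x ->
  y ^^ 2 = x ^^ 2 /\ y ⋅ x = x ^^ 3 ⋅ y.
Proof.
move=> d3 x2 y_x.
have sq_eq z : z ^^ 2 ⋅ x ^^ 2 = gone G -> z ^^ 2 = x ^^ 2.
  by move=> e; apply: (@gmulIg _ (x ^^ 2)); rewrite e -gpowD d2.
have y2 : y ^^ 2 = x ^^ 2.
  by case: (d3 y x) => [/y_x [] | [/(in_cyc_sym x2) /y_x [] | /sq_eq]].
have xy2 : (x ⋅ y) ^^ 2 = x ^^ 2.
  case: (d3 (x ⋅ y) x) => [/in_cyc_mulKr /y_x [] | [/(in_cyc_sym x2) | /sq_eq //]].
  by move/in_cyc_mulKr/y_x.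
have yxy : y ⋅ (x ⋅ y) = x by move: xy2; rewrite !gpow2 -gmulA => /gmulgI.
split=> //; apply: (@gmulIg _ y); rewrite -[LHS]gmulA yxy -gmulA -gpow2 y2 -gpowD.
by rewrite -(gpow_modn (3 + 2) (d2 x)) gpow1.
Qed.

End Exponent4.

Section Exponent2.
Variable G : Grp.
Hypothesis sq1 : forall x : G, x ^^ 2 = gone G.
Implicit Types x y : G.

Lemma exponent2_ginv x : ginv x = x.
Proof. by apply/esym/gmul_eq1; rewrite -gpow2. Qed.

Lemma exponent2_comm x y : x ⋅ y = y ⋅ x.
Proof.
rewrite -[RHS]exponent2_ginv; apply: gmul_eq1.
by rewrite gmulA -(gmulA x) -gpow2 sq1 gmulg1 -gpow2.
Qed.

Lemma in_cyc_exponent2 x y : x \in_cyc y -> x = gone G \/ x = y.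
Proof. by case=> [|[|[|]]] ->; rewrite ?(gpowSr y 2) ?sq1 ?gmul1; tauto. Qed.

Lemma exponent2_span : did4 (@gmul G) (@ginv G) (gone G) ->
  exists a b : G, forall g, [\/ g = gone G, g = a, g = b | g = a ⋅ b].
Proof.
move=> d4; case: (classic (exists a b, [/\ a <> gone G, b <> gone G & a <> b])).
  case=> a [b [a1 b1 ab]]; exists a, b => g.
  case: (d4 a b g) => [|[|[|[|[|[|[|]]]]]]]; rewrite ?exponent2_ginv;
    try case/in_cyc_exponent2 => e; subst; by [constructor | tauto].
move=> no_pair; case: (classic (exists a, a <> gone G)) => [[a a1] | trivG].
  exists a, a => g; case: (classic (g = gone G)) => [|g1]; first by constructor 1.
  by constructor 2; apply: NNPP => ga; apply: no_pair; exists g, a.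
by exists (gone G), (gone G) => g; constructor 1; apply: NNPP => g1; apply: trivG; exists g.
Qed.

End Exponent2.

Lemma sat_basis_iso_section_Q8 (G : Grp) : grp_sat_basis G -> iso_section_Q8 G.
Proof.
case=> d1 [d2 [d3 d4]].
case: (classic (forall x : G, x ^^ 2 = gone G)) => [sq1 | /not_all_ex_not [a a2]].
  have [a [b span]] := exponent2_span sq1 d4.
  apply: (@iso_section_Q8_presented _ a b (d2 a)).
  - by rewrite !sq1.
  - by rewrite exponent2_comm // (gpowSr a 2) sq1 gmul1.
  move=> g; case: (span g) => ->; [exists (q8c_of 0 false) | exists (q8c_of 1 false)
    | exists (q8c_of 0 true) | exists (q8c_of 1 true)]; by rewrite /q8_eval /= ?gmul1 ?gmulg1.
case: (classic (forall g : G, g \in_cyc a)) => [cyc | /not_all_ex_not [b b_a]].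
  exact: (iso_section_Q8_cyclic (d2 a) cyc).
have [b2 ba] := q8_relations d2 d3 a2 b_a.
apply: (iso_section_Q8_presented (d2 a) b2 ba).
apply: (@did1_inj_surj q8c) d1; first by rewrite card_prod card_ord card_bool.
exact: (q8_eval_inj (d2 a) b2 ba a2 b_a).
Qed.

Theorem proposition2 :
  sat_Q8_basis (@mulg 'Q_8) (@invg 'Q_8) (1%g : 'Q_8) /\
  (forall G : Grp, grp_sat_basis G -> iso_section_Q8 G).
Proof. split; [exact: Q8_sat_basis | exact: sat_basis_iso_section_Q8]. Qed.
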